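(* Let $H(u,v,z,t)=\sum_w u^{\mathrm{asc}(w)}v^{\mathrm{last}(w)}z^{\mathrm{zeros}(w)}t^{\mathrm{length}(w)}$, summed over all nonempty ascent sequences $w$. Then $$(v-1-tv(1-u))\,H(u,v,z,t)=tz(v-1)+t(z(v-1)-v)\,H(u,1,z,t)+tuv^2\,H(uv,1,z,t).$$
   Context: An ascent sequence of length $n$ is a sequence $(x_1,\dots,x_n)$ of nonnegative integers with $x_1=0$ and $x_i\in[0,1+\mathrm{asc}(x_1,\dots,x_{i-1})]$ for $2\le i\le n$, where $\mathrm{asc}(y_1,\dots,y_k)=|\{1\le j<k: y_j<y_{j+1}\}|$. For an ascent sequence $w$: $\mathrm{length}(w)$ is its number of entries, $\mathrm{asc}(w)$ its number of ascents, $\mathrm{last}(w)$ its rightmost entry, $\mathrm{zeros}(w)$ its number of entries equal to 0. $H$ is a formal power series in $t$ with polynomial coefficients in $u,v,z$; $H(u,1,z,t)$ and $H(uv,1,z,t)$ denote the substitutions $v\mapsto1$ and $(u,v)\mapsto(uv,1)$. *)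

From HB Require Import structures.
From mathcomp Require Import all_boot all_order all_algebra.
Set Implicit Arguments. Unset Strict Implicit. Unset Printing Implicit Defensive.
Import GRing.Theory.
Local Open Scope ring_scope.

Definition asc (s : seq nat) : nat :=
  match s with
  | [::] => 0%N
  | x :: s' => count id (pairmap (fun a b => (a < b)%N) x s')
  end.

(* (x_1,...,x_n) is an ascent sequence: nonempty, x_1 = 0 and
   x_i <= 1 + asc(x_1,...,x_{i-1}) for 2 <= i <= n (0-based: index i >= 1,
   prefix take i s). *)
Definition ascent_seq (s : seq nat) : bool :=
  match s with
  | [::] => false
  | x :: _ => (x == 0)%N &&
      all (fun i => (nth 0%N s i <= (asc (take i s)).+1)%N) (iota 1 (size s).-1)
  end.

Definition last_entry (s : seq nat) : nat := last 0%N s.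
Definition zeros (s : seq nat) : nat := count (pred1 0%N) s.

Definition fps (R : comNzRingType) := nat -> R.

Definition fps_add (R : comNzRingType) (f g : fps R) : fps R := fun n => f n + g n.
Definition fps_opp (R : comNzRingType) (f : fps R) : fps R := fun n => - f n.
Definition fps_mul (R : comNzRingType) (f g : fps R) : fps R :=
  fun n => \sum_(i < n.+1) f i * g (n - i)%N.
Definition fps_const (R : comNzRingType) (c : R) : fps R :=
  fun n => if n == 0%N then c else 0.
Definition fps_t (R : comNzRingType) : fps R := fun n => if n == 1%N then 1 else 0.

Declare Scope fps_scope.
Delimit Scope fps_scope with fps.
Notation "f + g" := (fps_add f g) : fps_scope.
Notation "f - g" := (fps_add f (fps_opp g)) : fps_scope.
Notation "f * g" := (fps_mul f g) : fps_scope.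
Notation "c %:S" := (fps_const c) (at level 2, format "c %:S") : fps_scope.
Notation "'t" := (fps_t _) : fps_scope.

(* Coefficient of t^n: sum over ascent sequences of length n; every entry
   x_i of an ascent sequence of length n satisfies x_i <= i-1 < n, so they
   are enumerated among the n-tuples with entries in 'I_n. *)
Definition Hser (R : comNzRingType) (u v z : R) : fps R :=
  fun n => \sum_(w : n.-tuple 'I_n | ascent_seq [seq val x | x <- w])
      (let s := [seq val x | x <- w] in
       u ^+ asc s * v ^+ last_entry s * z ^+ zeros s).

From HB Require Import structures.
From mathcomp Require Import all_boot all_order all_algebra ring.
From Stdlib Require Import FunctionalExtensionality.
Import GRing.Theory.
Local Open Scope ring_scope.

(* Every ascent sequence of length n+2 is uniquely w ++ [x] with w an ascent
   sequence of length n+1 and 0 <= x <= asc(w)+1.  Writing l = last(w), the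
   sum over x of the weights of w ++ [x] is a geometric sum, and
     (v - 1) * sum_x wt(w ++ [x])
       = u^asc(w) z^zeros(w) (z(v-1) - v + v(1-u) v^l + u v^2 v^asc(w)).
   Summing over w, the three terms give the coefficients of t^(n+1) in
   H(u,1,z,t), H(u,v,z,t) and H(uv,1,z,t): this is the coefficient of t^(n+2)
   of the identity, and those of t^0 and t^1 are checked directly. *)

Lemma pairmap_rcons (T U : Type) (f : T -> T -> U) y s x :
  pairmap f y (rcons s x) = rcons (pairmap f y s) (f (last y s) x).
Proof. by elim: s y => [|a s IH] y //=; rewrite IH. Qed.

Lemma asc_rcons w x : w != [::] ->
  asc (rcons w x) = (asc w + (last 0 w < x))%N.
Proof.
case: w => [|y w] //= _.
by rewrite pairmap_rcons -cats1 count_cat /= addn0.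
Qed.

Lemma asc_lt_size w : w != [::] -> (asc w < size w)%N.
Proof.
case: w => [|y w] //= _.
by rewrite ltnS (leq_trans (count_size _ _)) // size_pairmap.
Qed.

Lemma ascent_seq_rcons w x : w != [::] ->
  ascent_seq (rcons w x) = ascent_seq w && (x <= (asc w).+1)%N.
Proof.
case: w => [//|y w] _.
rewrite rcons_cons /= size_rcons -andbA; congr (_ && _).
rewrite -[(size w).+1]addn1 iotaD all_cat /= andbT add0n nth_rcons ltnn eqxx.
rewrite -cats1 take_size_cat //; congr (_ && _).
apply: eq_in_all => i; rewrite mem_iota add1n ltnS => /andP [_ le_i].
by rewrite -cat_cons nth_cat takel_cat /= ?ltnS ?le_i // ltnW.
Qed.

Lemma ascent_seq_last w : ascent_seq w -> (last 0 w <= (asc w).+1)%N.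
Proof.
case/lastP: w => [//|w x]; rewrite last_rcons.
have [-> /= /andP [/eqP -> _] //|nw] := eqVneq w [::].
rewrite ascent_seq_rcons // asc_rcons // => /andP [_ le_x].
by rewrite (leq_trans le_x) // ltnS leq_addr.
Qed.

Lemma ascent_seq_lt_size w : ascent_seq w -> all (fun x => x < size w)%N w.
Proof.
elim/last_ind: w => [//|w x IH].
have [-> /= /andP [/eqP -> _] //|nw] := eqVneq w [::].
rewrite ascent_seq_rcons // size_rcons all_rcons => /andP [asc_w le_x].
rewrite ltnS (leq_trans le_x (asc_lt_size _ nw)) /=.
by apply: sub_all (IH asc_w) => y /= /ltnW.
Qed.

Definition ascent_ext (L : seq (seq nat)) : seq (seq nat) :=
  [seq rcons w x | w <- L, x <- iota 0 (asc w).+2].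

Fixpoint ascent_seqs (n : nat) : seq (seq nat) :=
  match n with
  | 0 => [::]
  | 1 => [:: [:: 0%N]]
  | m.+1 => ascent_ext (ascent_seqs m)
  end.

Lemma ascent_seqsSS n : ascent_seqs n.+2 = ascent_ext (ascent_seqs n.+1).
Proof. by []. Qed.

Lemma mem_ascent_seqs n s :
  (s \in ascent_seqs n) = ascent_seq s && (size s == n).
Proof.
elim: n s => [|[|n] IH] s; first by case: s => [|x s] //=; rewrite andbF.
  by rewrite inE; case: s => [|x [|y s]] //=; rewrite ?eqseq_cons ?andbT ?andbF.
rewrite ascent_seqsSS; apply/allpairsPdep/idP => [[w [x [w_in x_in ->]]]|].
  move: w_in x_in; rewrite IH mem_iota leq0n add0n ltnS /=.
  move=> /andP [asc_w /eqP size_w] le_x.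
  have nw : w != [::] by rewrite -size_eq0 size_w.
  by rewrite ascent_seq_rcons // asc_w le_x size_rcons size_w /=.
case/lastP: s => [|w x]; first by rewrite andbF.
rewrite size_rcons eqSS => /andP [asc_wx size_w].
have nw : w != [::] by rewrite -size_eq0 (eqP size_w).
move: asc_wx; rewrite ascent_seq_rcons // => /andP [asc_w le_x].
by exists w, x; rewrite IH asc_w size_w mem_iota leq0n add0n ltnS /=.
Qed.

Lemma uniq_ascent_seqs n : uniq (ascent_seqs n).
Proof.
elim: n => [|[|n] IH] //; rewrite ascent_seqsSS.
apply: allpairs_uniq_dep => // [w _|[w1 x1] [w2 x2] _ _ /=].
  exact: iota_uniq.
by case/rcons_inj => -> ->.
Qed.

Section Weights.
Variable R : comNzRingType.

Definition ascent_wt (a b c : R) (s : seq nat) : R :=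
  a ^+ asc s * b ^+ last_entry s * c ^+ zeros s.

Lemma Hser_ascent_seqs (a b c : R) n :
  Hser a b c n = \sum_(s <- ascent_seqs n) ascent_wt a b c s.
Proof.
rewrite /Hser -[LHS](big_map (fun w : n.-tuple 'I_n => map val w) ascent_seq
  (ascent_wt a b c)) -big_filter.
apply/perm_big/uniq_perm => [||s]; rewrite ?uniq_ascent_seqs //.
  rewrite filter_uniq // map_inj_uniq ?index_enum_uniq //.
  by move=> w1 w2 /(inj_map val_inj) /val_inj.
rewrite mem_filter mem_ascent_seqs; have [asc_s|] //= := boolP (ascent_seq s).
apply/mapP/idP => [[w _ ->]|/eqP size_s]; first by rewrite size_map size_tuple.
have size_pmap_s : size (pmap insub s : seq 'I_n) == n.
  rewrite size_pmap (eq_count (@isSome_insub _ _ _)) -size_s.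
  by rewrite -all_count ascent_seq_lt_size.
exists (Tuple size_pmap_s); first exact: mem_index_enum.
rewrite /= (pmap_filter (@insubK _ _ _)) (eq_filter (@isSome_insub _ _ _)).
by apply/esym/all_filterP; rewrite -size_s ascent_seq_lt_size.
Qed.

Definition append_wt (a b c : R) (l x : nat) : R :=
  a ^+ (l < x)%N * b ^+ x * c ^+ (x == 0%N).

Lemma ascent_wt_rcons a b c w x : w != [::] ->
  ascent_wt a b c (rcons w x) =
  a ^+ asc w * c ^+ zeros w * append_wt a b c (last 0 w) x.
Proof.
move=> nw; rewrite /ascent_wt /append_wt asc_rcons // /last_entry last_rcons.
by rewrite /zeros -cats1 count_cat /= addn0 !exprD; ring.
Qed.

Lemma sum_append_wt_noasc a b c l k : (k <= l)%N ->
  (b - 1) * \sum_(0 <= x < k.+1) append_wt a b c l x =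
  c * (b - 1) - b + b ^+ k.+1.
Proof.
elim: k => [_|k IH lt_k].
  by rewrite big_nat1 /append_wt /= !expr0 !expr1; ring.
rewrite big_nat_recr //= mulrDr (IH (ltnW lt_k)) /append_wt ltnNge lt_k /=.
by rewrite !expr0 !exprS; ring.
Qed.

Lemma sum_append_wt a b c l m : (l <= m)%N ->
  (b - 1) * \sum_(0 <= x < m.+1) append_wt a b c l x =
  c * (b - 1) - b + b * (1 - a) * b ^+ l + a * b ^+ m.+1.
Proof.
move=> /subnKC <-; elim: (m - l)%N => [|d IH].
  by rewrite addn0 sum_append_wt_noasc // exprS; ring.
rewrite addnS big_nat_recr //= mulrDr IH /append_wt ltnS leq_addr /=.
by rewrite expr1 expr0 !exprS; ring.
Qed.

Lemma Hser_rec (a b c : R) n :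
  (b - 1) * Hser a b c n.+2 =
  (c * (b - 1) - b) * Hser a 1 c n.+1 + b * (1 - a) * Hser a b c n.+1
  + a * b ^+ 2 * Hser (a * b) 1 c n.+1.
Proof.
rewrite !Hser_ascent_seqs ascent_seqsSS big_allpairs_dep !mulr_sumr -!big_split.
apply: eq_big_seq => w; rewrite mem_ascent_seqs => /andP [asc_w /eqP size_w].
have nw : w != [::] by rewrite -size_eq0 size_w.
under eq_bigr do rewrite ascent_wt_rcons //.
rewrite -mulr_sumr mulrCA -[iota 0 _]/(index_iota 0 (asc w).+2).
rewrite sum_append_wt ?ascent_seq_last // /ascent_wt /last_entry /=.
by rewrite expr1n exprMn !exprS expr0; ring.
Qed.

Lemma Hser0 (a b c : R) : Hser a b c 0 = 0.
Proof. by rewrite Hser_ascent_seqs big_nil. Qed.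

Lemma Hser1 (a b c : R) : Hser a b c 1 = c.
Proof.
by rewrite Hser_ascent_seqs big_seq1 /ascent_wt /= !expr0 expr1 !mul1r.
Qed.

End Weights.

Section FpsCoef.
Variable R : comNzRingType.

Lemma coef_fps_addl_mul (f g h : fps R) n :
  ((f + g) * h)%fps n = (f * h)%fps n + (g * h)%fps n.
Proof. by rewrite -big_split; apply: eq_bigr => i _; rewrite mulrDl. Qed.

Lemma coef_fps_oppl_mul (f h : fps R) n :
  (fps_opp f * h)%fps n = - (f * h)%fps n.
Proof. by rewrite -sumrN; apply: eq_bigr => i _; rewrite mulNr. Qed.

Lemma coef_fps_constl_mul (c : R) (h : fps R) n : (c%:S * h)%fps n = c * h n.
Proof.
by rewrite /fps_mul big_ord_recl subn0 big1 ?addr0 // => i _; rewrite mul0r.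
Qed.

Lemma coef_fps_monomial1_mul (g h : fps R) (c : R) :
  (forall n, g n = if n == 1%N then c else 0) ->
  forall n, (g * h)%fps n = if n is m.+1 then c * h m else 0.
Proof.
move=> g_monomial1 [|n]; first by rewrite /fps_mul big_ord1 g_monomial1 mul0r.
rewrite /fps_mul big_ord_recl g_monomial1 mul0r add0r.
rewrite big_ord_recl g_monomial1 subn1 /=.
by rewrite big1 ?addr0 // => i _; rewrite g_monomial1 mul0r.
Qed.

Lemma coef_fps_tC (c : R) n : ('t * c%:S)%fps n = if n == 1%N then c else 0.
Proof.
rewrite (@coef_fps_monomial1_mul _ _ 1) //.
by case: n => [|[|n]] //=; rewrite mul1r.
Qed.

Lemma coef_fps_tC_mul (c : R) (h : fps R) n :
  ('t * c%:S * h)%fps n = if n is m.+1 then c * h m else 0.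
Proof. exact: coef_fps_monomial1_mul (coef_fps_tC c) n. Qed.

End FpsCoef.

Theorem lemma5 (R : comNzRingType) (u v z : R) :
  (((v - 1)%:S - 't * (v * (1 - u))%:S) * Hser u v z)%fps =
  ('t * (z * (v - 1))%:S
   + 't * (z * (v - 1) - v)%:S * Hser u 1 z
   + 't * (u * v ^+ 2)%:S * Hser (u * v) 1 z)%fps.
Proof.
apply: functional_extensionality => n.
rewrite coef_fps_addl_mul coef_fps_oppl_mul coef_fps_constl_mul /fps_add.
rewrite coef_fps_tC !coef_fps_tC_mul.
case: n => [|[|n]] /=.
- by rewrite Hser0; ring.
- by rewrite !Hser0 Hser1; ring.
- by rewrite (Hser_rec _ u v z n); ring.
Qed.
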